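(* Let $n\ge 4$ be an integer, and let $I$ be chosen uniformly at random among the $2$-element subsets of $\{1,\ldots,n\}$. Then the probability that the sequence $(C_0(I),\ldots,C_{s(I)}(I))$ of Naruse-Newton coefficients of $I$ is unimodal is exactly $\frac{4}{n}$.
   Context: Partitions are drawn as Young diagrams $\mathbb{D}(\lambda)$ in English notation; $c_{i,j}$ is the cell in row $i$, column $j$. The hook length $h_\lambda(c)$ is the number of cells of $\mathbb{D}(\lambda)$ weakly right of $c$ in its row or weakly below $c$ in its column (counting $c$ once). For $\mu\subseteq\lambda$, an excited diagram of $\lambda/\mu$ is a subset of $\mathbb{D}(\lambda)$ obtained from $\mathbb{D}(\mu)$ by repeatedly replacing a cell $c_{i,j}\in D$ by $c_{i+1,j+1}$, allowed iff $c_{i+1,j+1}\in\mathbb{D}(\lambda)$ and none of $c_{i,j+1},c_{i+1,j},c_{i+1,j+1}$ lies in $D$; $\mathbb{E}(\lambda/\mu)$ is their set. A ribbon with $n$ cells is read from its lower-left to its upper-right cell, each successive cell directly right of or directly above the previous; it corresponds to the set of $i\in\{1,\ldots,n-1\}$ with cell $i$ directly below cell $i+1$. A descent set is a non-empty finite set $I$ of positive integers; $\lambda^I$ is the unique partition with $\lambda^I_1=\lambda^I_2$ such that the cells $c_{i,j}\in\mathbb{D}(\lambda^I)$ with fewer than three of $c_{i,j+1},c_{i+1,j},c_{i+1,j+1}$ in $\mathbb{D}(\lambda^I)$ form a ribbon corresponding to $I$; this ribbon is $\mathbb{D}(\lambda^I)\setminus\mathbb{D}(\mu^I)$ for a partition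 $\mu^I$. Let $s(I)=\lambda^I_1-1$. Naruse-Newton coefficients: every excited diagram of $\lambda^I/\mu^I$ meets row 1 in $\{c_{1,1},\ldots,c_{1,r}\}$, $0\le r\le s$; for $0\le j\le s(I)$, $C_j(I)=\sum_D\prod_{c\in D,\,c\notin\text{row }1}h_{\lambda^I}(c)$, summed over $D\in\mathbb{E}(\lambda^I/\mu^I)$ with exactly $s-j$ cells in row 1. A sequence $(x_k)_{k=0}^m$ is unimodal if there is an index $i$ with $0\le i\le m$ such that $x_0\le x_1\le\cdots\le x_i$ and $x_i\ge x_{i+1}\ge\cdots\ge x_m$. *)

From Stdlib Require Import ClassicalEpsilon.
From mathcomp Require Import all_boot all_order all_algebra.
Set Implicit Arguments. Unset Strict Implicit. Unset Printing Implicit Defensive.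

(* Cells of the plane are pairs (i, j) of nats, 1-indexed as in the paper:
   row i, column j.  A partition is a weakly decreasing seq of positive nats. *)
Definition is_partition (la : seq nat) : bool :=
  sorted geq la && all (fun x => 0 < x) la.

Definition inD (la : seq nat) (p : nat * nat) : bool :=
  (0 < p.1 <= size la) && (0 < p.2 <= nth 0 la p.1.-1).

Definition rim (la : seq nat) (p : nat * nat) : bool :=
  inD la p &&
  (inD la (p.1, p.2.+1) + inD la (p.1.+1, p.2) + inD la (p.1.+1, p.2.+1) < 3).

Definition rstep (a b : nat * nat) : bool :=
  ((b.1 == a.1) && (b.2 == a.2.+1)) || ((b.1.+1 == a.1) && (b.2 == a.2)).
Definition above (a b : nat * nat) : bool := (b.1.+1 == a.1) && (b.2 == a.2).

(* The set of cells S forms a ribbon (read from lower-left to upper-right,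
   cells numbered 1..N) corresponding to the descent set I. *)
Definition ribbon_of (I : seq nat) (S : nat * nat -> bool) : Prop :=
  exists cs : seq (nat * nat),
    [/\ uniq cs,
        (forall c, (c \in cs) = S c),
        (forall k, 0 < k < size cs -> rstep (nth (0,0) cs k.-1) (nth (0,0) cs k)) &
        (forall k, (k \in I) <->
           (0 < k < size cs /\ above (nth (0,0) cs k.-1) (nth (0,0) cs k)))].

Definition is_lamI (I : seq nat) (la : seq nat) : Prop :=
  [/\ is_partition la, nth 0 la 0 = nth 0 la 1 & ribbon_of I (rim la)].

Definition lamI (I : seq nat) : seq nat := epsilon (inhabits [::]) (is_lamI I).

Definition is_muI (la mu : seq nat) : Prop :=
  [/\ is_partition mu, (forall p, inD mu p -> inD la p) &
      (forall p, rim la p = inD la p && ~~ inD mu p)].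

Definition muI (I : seq nat) : seq nat := epsilon (inhabits [::]) (is_muI (lamI I)).

Definition sI (I : seq nat) : nat := (nth 0 (lamI I) 0).-1.

(* finite grid of cells containing D(la): 'I_R * 'I_C, 0-indexed *)
Definition cell (R C : nat) := ('I_R * 'I_C)%type.
Definition pos R C (c : cell R C) : nat * nat := ((c.1 : nat).+1, (c.2 : nat).+1).

Definition memD R C (D : {set cell R C}) (p : nat * nat) : bool :=
  [exists c in D, pos c == p].

Definition emove (la : seq nat) R C (D D' : {set cell R C}) : bool :=
  [exists c in D, exists c' : cell R C,
     [&& pos c' == ((pos c).1.+1, (pos c).2.+1), inD la (pos c'),
         ~~ memD D ((pos c).1, (pos c).2.+1),
         ~~ memD D ((pos c).1.+1, (pos c).2),
         ~~ memD D (pos c') &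
         D' == (D :\ c) :|: [set c']]].

Definition Dset (mu : seq nat) R C : {set cell R C} := [set c | inD mu (pos c)].

Definition excited (la mu : seq nat) R C (D : {set cell R C}) : bool :=
  connect (@emove la R C) (Dset mu R C) D.

Definition hook (la : seq nat) R C (c : cell R C) : nat :=
  #|[set c' : cell R C | inD la (pos c') &&
       (((c'.1 == c.1) && (c.2 <= c'.2)) || ((c'.2 == c.2) && (c.1 <= c'.1)))]|.

Definition NNcoef_gen (la mu : seq nat) (s j : nat) : nat :=
  \sum_(D : {set cell (size la) (nth 0 la 0)} |
          excited la mu D && (#|[set c in D | (c.1 : nat) == 0]| == s - j))
     \prod_(c in D | (c.1 : nat) != 0) hook la c.

Definition NNcoef (I : seq nat) (j : nat) : nat :=
  NNcoef_gen (lamI I) (muI I) (sI I) j.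

Definition unimodal (x : nat -> nat) (m : nat) : bool :=
  [exists i : 'I_m.+1, [forall k : 'I_m,
     ((k < i) ==> (x k <= x k.+1)) && ((i <= k) ==> (x k.+1 <= x k))]].

(* a subset of 'I_n, viewed as a subset of {1,...,n} *)
Definition descI n (I : {set 'I_n}) : seq nat := [seq (val i).+1 | i <- enum I].

From Stdlib Require Import ClassicalEpsilon.
From mathcomp Require Import all_boot all_order all_algebra.
From mathcomp Require Import zify ring.
Set Implicit Arguments. Unset Strict Implicit. Unset Printing Implicit Defensive.

(* For I = {i+1, j+1} with i < j, the rim of lambda^I is a ribbon that drops a row
   exactly at its cells i+1 and j+1; this forces lambda^I = (j, j, i+1) and
   mu^I = (j-1, i). An excited diagram of lambda^I/mu^I slides the last cells of
   the first and of the second row of mu^I one step down the diagonal, so it is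
   determined by the number r of cells left in the first row and the column u
   where the slid part of the second row starts. For r = s - k this factors C_k(I)
   as the product of the hooks of the second-row cells right of column r times a
   sum, over u <= min(r, i), of hook products. The sequence increases while r > i;
   for i >= 2 it drops strictly at r = i, and its last ratio C_s / C_(s-1) is
   i j / (i + j + 1), which exceeds 1 once i >= 2 and j >= 4. So the sequence is
   unimodal iff i <= 1 or j <= 3, which holds for 2n - 2 of the C(n, 2) pairs. *)

Lemma eq_unimodal (x y : nat -> nat) m :
  (forall k, k <= m -> x k = y k) -> unimodal x m = unimodal y m.
Proof.
move=> exy; apply: eq_existsb => p; apply: eq_forallb => k.
by rewrite !exy // ltnW.
Qed.

Lemma unimodal_peak (x : nat -> nat) m p : p <= m ->
  (forall k, k < p -> x k <= x k.+1) -> (forall k, p <= k < m -> x k.+1 <= x k) ->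
  unimodal x m.
Proof.
move=> pm up down; apply/existsP; exists (Ordinal (pm : p < m.+1)).
apply/forallP => k; apply/andP; split; apply/implyP => /= hk; first exact: up.
by apply: down; rewrite hk ltn_ord.
Qed.

Lemma unimodal_dip_rise (x : nat -> nat) m k1 k2 : k1 < k2 < m ->
  x k1.+1 < x k1 -> x k2 < x k2.+1 -> ~~ unimodal x m.
Proof.
case/andP=> k12 k2m dip rise; apply/existsP => -[p /forallP peak].
have [k2p | pk2] := ltnP k2 p.
- have /andP[/implyP/(_ (ltn_trans k12 k2p))] := peak (Ordinal (ltn_trans k12 k2m)).
  by rewrite leqNgt dip.
- have /andP[_ /implyP/(_ pk2)] := peak (Ordinal k2m).
  by rewrite leqNgt rise.
Qed.

Lemma card_pair_pred (T1 T2 : finType) (P : pred (T1 * T2)) :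
  #|[set p | P p]| = \sum_x \sum_y P (x, y).
Proof.
rewrite -sum1_card big_mkcond /= pair_big /=; apply: eq_bigr => -[x y] _.
by rewrite inE; case: (P _).
Qed.

Lemma sum_ord_range C lo hi (f : 'I_C -> bool) :
  (forall y : 'I_C, f y = (lo <= y < hi)) -> \sum_(y < C) f y = minn hi C - lo.
Proof.
move=> fE; under eq_bigr => y _ do rewrite fE.
elim: C {f fE} => [|C IH]; first by rewrite big_ord0; lia.
by rewrite big_ord_recr /= IH; lia.
Qed.

Lemma prod_pair (T1 T2 : finType) (F : T1 * T2 -> nat) :
  \prod_p F p = \prod_x \prod_y F (x, y).
Proof. by rewrite pair_bigA; apply: eq_bigr => -[]. Qed.

Lemma cell_eqE R C (c d : cell R C) : (c == d) = ((c.1 : nat) == d.1) && ((c.2 : nat) == d.2).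
Proof. by []. Qed.

(** * The shapes lambda^I and mu^I *)

Definition lam_pair i j : seq nat := [:: j; j; i.+1].

Lemma inD_lam_pair i j r c :
  inD (lam_pair i j) (r, c) = (0 < r <= 2) && (0 < c <= j) || (r == 3) && (0 < c <= i.+1).
Proof. by rewrite /inD /=; case: r => [|[|[|[|r]]]] /=; lia. Qed.

Lemma rim_lam_pair i j r c : i < j ->
  rim (lam_pair i j) (r, c) =
  [|| (r == 3) && (0 < c <= i.+1), (r == 2) && (i < c <= j) | (r == 1) && (c == j)].
Proof. by move=> ij; rewrite /rim /= !inD_lam_pair; lia. Qed.

(* The k-th cell (from 0) of the rim of [lam_pair i j], read from the lower left. *)
Definition ribbon_pair i j k : nat * nat := (1 + (k <= j) + (k <= i), minn (k + (k <= i)) j).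

Lemma lam_pair_is_lamI i j I : i < j -> I =i [:: i.+1; j.+1] -> is_lamI I (lam_pair i j).
Proof.
move=> ij IE; split=> //; first by rewrite /is_partition /=; lia.
exists [seq ribbon_pair i j k | k <- iota 0 j.+2]; split.
- rewrite map_inj_in_uniq ?iota_uniq // => k l; rewrite !mem_iota => hk hl.
  by case; lia.
- case=> r c; rewrite rim_lam_pair //; apply/mapP/idP => [[k]|].
    by rewrite mem_iota => hk [-> ->]; lia.
  have in_iota k : k < j.+2 -> k \in iota 0 j.+2 by rewrite mem_iota.
  by case/or3P=> /andP[/eqP-> hc]; [exists c.-1 | exists c | exists j.+1];
    rewrite ?in_iota ?(eqP hc) //; try congr pair; lia.
- move=> k; rewrite size_map size_iota => hk.
  by rewrite !(nth_map 0) ?size_iota ?nth_iota /rstep /=; lia.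
- move=> k; rewrite IE !inE size_map size_iota.
  case hk: (0 < k < j.+2); last by split; [lia | case].
  by rewrite !(nth_map 0) ?size_iota ?nth_iota /above /=; try split; lia.
Qed.

Lemma ribbon_content (cs : seq (nat * nat)) :
  (forall k, 0 < k < size cs -> rstep (nth (0,0) cs k.-1) (nth (0,0) cs k)) ->
  forall k, k < size cs ->
  (nth (0,0) cs k).2 + (nth (0,0) cs 0).1 = (nth (0,0) cs 0).2 + (nth (0,0) cs k).1 + k.
Proof.
move=> cs_step; elim=> [|k IH] hk; first lia.
move: (cs_step k.+1) (IH (ltnW hk)); rewrite /rstep /=.
by case: (nth _ cs k) => a1 a2; case: (nth _ cs k.+1) => b1 b2 /=; lia.
Qed.

Section RibbonPairShape.

(* cs is a ribbon of la with descent set I, as in [is_lamI I la]. It runs from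
   (size la, 1) to the corner (1, L), and walking back from that corner it goes
   down one row exactly at the two descents; this fixes the row of every cell
   and then la itself. *)

Variables (i j : nat) (I la : seq nat) (cs : seq (nat * nat)).
Hypotheses (ij : i < j) (IE : I =i [:: i.+1; j.+1]).
Hypotheses (la_pos : all (fun x => 0 < x) la) (la01 : nth 0 la 0 = nth 0 la 1).
Hypotheses (cs_rim : forall c, (c \in cs) = rim la c)
  (cs_step : forall k, 0 < k < size cs -> rstep (nth (0,0) cs k.-1) (nth (0,0) cs k))
  (cs_desc : forall k, k \in I <->
     0 < k < size cs /\ above (nth (0,0) cs k.-1) (nth (0,0) cs k)).

Local Notation N := (size cs).
Local Notation L := (nth 0 la 0).
Local Notation ribbon k := (nth (0,0) cs k).

Let cs_inD k : k < N -> inD la (ribbon k).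
Proof. by move=> hk; have := mem_nth (0,0) hk; rewrite cs_rim => /andP[]. Qed.

Let rim_index c : rim la c -> index c cs < N /\ ribbon (index c cs) = c.
Proof. by rewrite -cs_rim => hc; rewrite index_mem nth_index. Qed.

Let content := ribbon_content cs_step.

Let desc_size : j.+1 < N.
Proof. by have [] := (cs_desc j.+1).1; rewrite ?IE ?inE ?eqxx ?orbT //; case/andP. Qed.

Let la_size_gt0 : 0 < size la.
Proof. by move: (cs_inD (ltn_trans (ltn0Sn j) desc_size)); rewrite /inD; lia. Qed.

Let L_gt0 : 0 < L.
Proof. exact: (all_nthP 0 la_pos _ la_size_gt0). Qed.

Let la_size_gt1 : 1 < size la.
Proof. by rewrite ltnNge; apply/negP => h; move: L_gt0; rewrite la01 nth_default. Qed.

Lemma ribbon_last : ribbon N.-1 = (1, L).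
Proof.
have [k1N e1] : index (1, L) cs < N /\ ribbon (index (1, L) cs) = (1, L).
  by apply: rim_index; rewrite /rim /inD /=; lia.
suff -> : N.-1 = index (1, L) cs by [].
case: (ltnP (index (1, L) cs).+1 N) => h; last lia.
have /cs_step : 0 < (index (1, L) cs).+1 < N by rewrite h.
move: (cs_inD h); rewrite /= e1 /rstep.
by case: (nth _ cs _) => -[|[|b1]] b2; rewrite /inD /=; lia.
Qed.

Lemma ribbon_size : N = j.+2.
Proof.
have [k2N e2] : index (2, L) cs < N /\ ribbon (index (2, L) cs) = (2, L).
  by apply: rim_index; move: la_size_gt1; rewrite /rim /inD /= -la01; lia.
have lastN : N.-1 < N by lia.
have k2 : index (2, L) cs = N.-2.
  by move: (content k2N) (content lastN); rewrite e2 ribbon_last /=; lia.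
have : N.-1 \in I.
  apply/cs_desc; split; first lia.
  by rewrite -k2 e2 ribbon_last /above /= !eqxx.
by rewrite IE !inE; lia.
Qed.

Lemma ribbon_row k : k < N -> (ribbon k).1 = 1 + (k <= j) + (k <= i).
Proof.
have row_step t : 0 < t < N -> (ribbon t.-1).1 = (ribbon t).1 + ((t == i.+1) || (t == j.+1)).
  move=> ht; move: (cs_desc t) (cs_step ht); rewrite IE !inE /above /rstep.
  case: (nth _ cs t.-1) => a1 a2; case: (nth _ cs t) => b1 b2 /=.
  by case: ((t == i.+1) || (t == j.+1)) => -[]; lia.
suff row_from_end d : d <= j.+1 ->
    (ribbon (j.+1 - d)).1 = 1 + (j.+1 - d <= j) + (j.+1 - d <= i).
  by rewrite ribbon_size => hk; move: (row_from_end (j.+1 - k)); rewrite subKn; lia.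
elim: d => [|d IH] hd.
  by rewrite subn0 (_ : j.+1 = N.-1) ?ribbon_last ?ribbon_size /=; lia.
have := row_step (j.+1 - d); rewrite (_ : (j.+1 - d).-1 = j.+1 - d.+1); last lia.
by rewrite ribbon_size IH; lia.
Qed.

Lemma ribbon_first : ribbon 0 = (size la, 1).
Proof.
have [k0N e0] : index (size la, 1) cs < N /\ ribbon (index (size la, 1) cs) = (size la, 1).
  by apply: rim_index; move: ((all_nthP 0 la_pos) (size la).-1); rewrite /rim /inD /=; lia.
suff k0 : index (size la, 1) cs = 0 by rewrite -e0 k0.
case: (posnP (index (size la, 1) cs)) => // h.
have /cs_step : 0 < index (size la, 1) cs < N by rewrite h.
have /cs_inD : (index (size la, 1) cs).-1 < N by lia.
rewrite e0 /rstep; case: (nth _ cs _) => b1 b2; rewrite /inD /=; lia.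
Qed.

Lemma lam_pair_unique : la = lam_pair i j.
Proof.
have la3 : size la = 3.
  by move: (ribbon_row (ltn_trans (ltn0Sn j) desc_size)); rewrite ribbon_first.
have Lj : L = j.
  move: (content desc_size) (ribbon_row desc_size).
  by rewrite ribbon_first la3 (_ : j.+1 = N.-1) ?ribbon_last ?ribbon_size /=; lia.
set x := nth 0 la 2.
have x_gt0 : 0 < x by apply: (all_nthP 0 la_pos); lia.
have [k3N e3] : index (3, x) cs < N /\ ribbon (index (3, x) cs) = (3, x).
  by apply: rim_index; rewrite /rim /inD /= la3; lia.
have x_le : x <= i.+1.
  by move: (content k3N) (ribbon_row k3N); rewrite e3 ribbon_first la3 /=; lia.
have x_ge : i.+1 <= x.
  have iN : i < N by rewrite ribbon_size; lia.
  move: (content iN) (ribbon_row iN) (cs_inD iN); rewrite ribbon_first la3.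
  case: (nth _ cs i) => b1 b2 /= h1 h2; have -> : b1 = 3 by lia.
  by rewrite /inD la3 /= -/x; lia.
apply: (@eq_from_nth _ 0); rewrite la3 // => -[|[|[|k]]] // _ /=.
- by rewrite -la01.
- by rewrite -/x; lia.
Qed.

End RibbonPairShape.

Lemma lamI_pair i j I : i < j -> I =i [:: i.+1; j.+1] -> lamI I = lam_pair i j.
Proof.
move=> ij IE; have : is_lamI I (lamI I).
  exact: (epsilon_spec _ (is_lamI I) (ex_intro _ _ (lam_pair_is_lamI ij IE))).
case=> /andP[_ la_pos] la01 [cs [_ cs_rim cs_step cs_desc]].
exact: lam_pair_unique cs_rim cs_step cs_desc.
Qed.

Lemma is_muI_inD la mu p : is_muI la mu -> inD mu p = inD la p && ~~ rim la p.
Proof.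
case=> _ mu_sub rimE; rewrite rimE; move: (mu_sub p).
by case: (inD mu p); case: (inD la p) => // /(_ isT).
Qed.

Definition mu_pair i j : seq nat :=
  if i is 0 then (if j is 1 then [::] else [:: j.-1]) else [:: j.-1; i].

Lemma inD_mu_pair i j r c : i < j ->
  inD (mu_pair i j) (r, c) = (r == 1) && (0 < c <= j.-1) || (r == 2) && (0 < c <= i).
Proof.
rewrite /mu_pair /inD; case: i => [|i] ij; last by case: r => [|[|[|r]]] /=; lia.
by case: j ij => [|[|j]] ij; case: r => [|[|[|r]]] /=; lia.
Qed.

Lemma mu_pair_is_muI i j : i < j -> is_muI (lam_pair i j) (mu_pair i j).
Proof.
move=> ij; split.
- rewrite /is_partition /mu_pair; case: i ij => [|i] ij; last by rewrite /=; lia.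
  by case: j ij => [|[|j]] ij /=; lia.
- by case=> r c; rewrite inD_mu_pair // inD_lam_pair; lia.
- by case=> r c; rewrite inD_mu_pair // inD_lam_pair rim_lam_pair //; lia.
Qed.

Lemma inD_muI_pair i j I r c : i < j -> I =i [:: i.+1; j.+1] ->
  inD (muI I) (r, c) = (r == 1) && (0 < c <= j.-1) || (r == 2) && (0 < c <= i).
Proof.
move=> ij IE; have muI_spec : is_muI (lamI I) (muI I).
  by apply: epsilon_spec; exists (mu_pair i j); rewrite (lamI_pair ij IE); exact: mu_pair_is_muI.
by rewrite (is_muI_inD _ muI_spec) (lamI_pair ij IE) rim_lam_pair // inD_lam_pair; lia.
Qed.

(** * Excited diagrams of lambda^I/mu^I *)

Definition in_excited_pair i r u (x y : nat) : bool :=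
  [|| (x == 0) && (y < r), (x == 1) && ((y < u) || (r < y)) | (x == 2) && (u < y <= i)].

(* In 0-indexed cells: D(mu_pair i j) with its first row cut to r cells, the
   cells at columns r..j-2 of row 0 slid diagonally to row 1, and those at
   columns u..i-1 of row 1 slid diagonally to row 2. *)
Definition excited_pair i j r u : {set cell 3 j} :=
  [set c : cell 3 j | in_excited_pair i r u c.1 c.2].

Lemma memD_excited_pair i j r u x y : memD (excited_pair i j r u) (x, y) =
  [&& 0 < x <= 3, 0 < y <= j & in_excited_pair i r u x.-1 y.-1].
Proof.
apply/existsP/idP => [[[[c1 h1] [c2 h2]]] /andP[]|].
  by rewrite inE /pos /= => cin /eqP[<- <-] /=; lia.
move=> xy; have h1 : x.-1 < 3 by lia. have h2 : y.-1 < j by lia.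
exists (Ordinal h1, Ordinal h2); rewrite inE /pos /=.
by apply/andP; split; [move: xy | apply/eqP; congr pair]; lia.
Qed.

Lemma connect_down (T : finType) (e : rel T) (f : nat -> T) a b :
  a <= b -> (forall k, a < k <= b -> e (f k) (f k.-1)) -> connect e (f b) (f a).
Proof.
elim: b => [|b IH]; first by rewrite leqn0 => /eqP-> _; exact: connect0.
rewrite leq_eqVlt => /orP[/eqP-> _ | ab step]; first exact: connect0.
have last_step : e (f b.+1) (f b) by apply: step; rewrite ab /=.
apply: connect_trans (connect1 last_step) (IH ab _) => k /andP[ak kb].
by apply: step; rewrite ak ltnW.
Qed.

Section ExcitedPair.

Variables i j : nat.
Hypothesis ij : i < j.

Local Notation lam := (lam_pair i j).
Local Notation ex := (excited_pair i j).

Lemma emove_excited_pair_low r u : 0 < u <= r -> r < j -> u <= i ->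
  emove lam (ex r u) (ex r u.-1).
Proof.
move=> ur rj ui; have hc : u.-1 < j by lia. have hc' : u < j by lia.
apply/existsP; exists (Ordinal (isT : 1 < 3), Ordinal hc); rewrite inE /=.
apply/andP; split; first by rewrite /in_excited_pair /=; lia.
apply/existsP; exists (Ordinal (isT : 2 < 3), Ordinal hc').
have -> : ex r u.-1 ==
    ex r u :\ (Ordinal (isT : 1 < 3), Ordinal hc) :|: [set (Ordinal (isT : 2 < 3), Ordinal hc')].
  by apply/eqP/setP => -[[z1 hz1] [z2 hz2]]; rewrite !inE !cell_eqE /in_excited_pair /=; lia.
by rewrite /pos /= inD_lam_pair !memD_excited_pair /in_excited_pair /= xpair_eqE /=; lia.
Qed.

Lemma emove_excited_pair_mid r u : u < r < j -> u <= i -> emove lam (ex r u) (ex r.-1 u).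
Proof.
move=> urj ui; have hc : r.-1 < j by lia. have hc' : r < j by lia.
apply/existsP; exists (Ordinal (isT : 0 < 3), Ordinal hc); rewrite inE /=.
apply/andP; split; first by rewrite /in_excited_pair /=; lia.
apply/existsP; exists (Ordinal (isT : 1 < 3), Ordinal hc').
have -> : ex r.-1 u ==
    ex r u :\ (Ordinal (isT : 0 < 3), Ordinal hc) :|: [set (Ordinal (isT : 1 < 3), Ordinal hc')].
  by apply/eqP/setP => -[[z1 hz1] [z2 hz2]]; rewrite !inE !cell_eqE /in_excited_pair /=; lia.
by rewrite /pos /= inD_lam_pair !memD_excited_pair /in_excited_pair /= xpair_eqE /=; lia.
Qed.

Definition excited_pair_param r u := [&& u <= r, r < j & u <= i].

Lemma emove_excited_pair_inv r u D : excited_pair_param r u -> emove lam (ex r u) D ->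
  exists r' u', excited_pair_param r' u' /\ D = ex r' u'.
Proof.
rewrite /excited_pair_param => ruij.
case/existsP=> -[[c1 h1] [c2 h2]] /andP[cin /existsP[[[d1 g1] [d2 g2]]]].
case/and5P => pc hin n1 n2 /andP[n3 /eqP ->]; move: cin pc hin n1 n2 n3.
rewrite inE /pos /= inD_lam_pair !memD_excited_pair xpair_eqE /in_excited_pair /=.
case: c1 h1 => [|[|c1]] h1 cin pc hin n1 n2 n3; last lia.
- have ed1 : d1 = 1 by lia. have ed2 : d2 = c2.+1 by lia. subst d1 d2.
  have ec2 : c2 = r.-1 by lia. subst c2.
  exists r.-1, u; split; first lia.
  apply/setP => -[[z1 hz1] [z2 hz2]]; move: ruij {cin pc hin n1 n2 n3}.
  by rewrite !inE !cell_eqE /in_excited_pair /=; lia.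
- have ed1 : d1 = 2 by lia. have ed2 : d2 = c2.+1 by lia. subst d1 d2.
  have ec2 : c2 = u.-1 by lia. subst c2.
  have u_gt0 : 0 < u by lia.
  exists r, u.-1; split; first lia.
  apply/setP => -[[z1 hz1] [z2 hz2]]; move: ruij u_gt0 {cin pc hin n1 n2 n3}.
  by rewrite !inE !cell_eqE /in_excited_pair /=; lia.
Qed.

Lemma excited_pairP D : connect (@emove lam 3 j) (ex j.-1 i) D <->
  exists r u, excited_pair_param r u /\ D = ex r u.
Proof.
split=> [/connectP[p] | [r [u [/and3P[ur rj ui] ->]]]].
  have : exists r u, excited_pair_param r u /\ ex j.-1 i = ex r u.
    by exists j.-1, i; split=> //; apply/and3P; split; lia.
  elim: p (ex j.-1 i) => [|D' p IH] D0 /=; first by move=> ? _ ->.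
  move=> [r [u [ru ->]]] /andP[/(emove_excited_pair_inv ru) D'_ok path_p].
  exact: IH.
apply: (@connect_trans _ _ (ex j.-1 u)).
  apply: (@connect_down _ _ (ex j.-1) u i ui) => v /andP[uv vi].
  by apply: emove_excited_pair_low; lia.
apply: (@connect_down _ _ (ex^~ u) r j.-1) => [|s /andP[rs sj]]; first lia.
by apply: emove_excited_pair_mid; lia.
Qed.

End ExcitedPair.

Definition hook_mid i j y := j - y + (y <= i).
Definition hook_low i y := i.+1 - y.

Definition mid_tail i j r := \prod_(y < j | r < y) hook_mid i j y.
Definition mid_head i j u := \prod_(y < j | y < u) hook_mid i j y.
Definition low_tail i j u := \prod_(y < j | u < y <= i) hook_low i y.
Definition weight_sum i j r := \sum_(u < i.+1 | u <= r) mid_head i j u * low_tail i j u.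
Definition pair_coef i j k := mid_tail i j (j.-1 - k) * weight_sum i j (j.-1 - k).

Section ExcitedPairWeight.

Variables i j : nat.
Hypothesis ij : i < j.

Local Notation ex := (excited_pair i j).

Lemma hook_lam_pair_mid (c : cell 3 j) :
  (c.1 : nat) = 1 -> hook (lam_pair i j) c = hook_mid i j c.2.
Proof.
case: c => -[x hx] [y hy] /= x1; subst x.
rewrite /hook card_pair_pred !big_ord_recr big_ord0 /= add0n.
rewrite [X in addn (addn X _) _](@sum_ord_range _ 0 0);
  first rewrite [X in addn (addn _ X) _](@sum_ord_range _ y j);
  first rewrite [X in addn _ X](@sum_ord_range _ y (minn y.+1 i.+1)).
- by rewrite /hook_mid; lia.
all: by move=> [z hz]; rewrite /pos /= inD_lam_pair -!val_eqE /=; lia.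
Qed.

Lemma hook_lam_pair_low (c : cell 3 j) :
  (c.1 : nat) = 2 -> hook (lam_pair i j) c = hook_low i c.2.
Proof.
case: c => -[x hx] [y hy] /= x2; subst x.
rewrite /hook card_pair_pred !big_ord_recr big_ord0 /= add0n.
rewrite [X in addn (addn X _) _](@sum_ord_range _ 0 0);
  first rewrite [X in addn (addn _ X) _](@sum_ord_range _ 0 0);
  first rewrite [X in addn _ X](@sum_ord_range _ y i.+1).
- by rewrite /hook_low; lia.
all: by move=> [z hz]; rewrite /pos /= inD_lam_pair -!val_eqE /=; lia.
Qed.

Lemma excited_pair_weight r u : u <= r -> r < j ->
  \prod_(c in ex r u | (c.1 : nat) != 0) hook (lam_pair i j) c =
  mid_tail i j r * (mid_head i j u * low_tail i j u).
Proof.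
move=> ur rj; rewrite big_mkcond /= prod_pair !big_ord_recr big_ord0 /= mul1n.
rewrite big1 ?mul1n => [|y _]; last by rewrite andbF.
rewrite mulnA; congr (_ * _).
  rewrite /mid_tail /mid_head !(big_mkcond (fun y : 'I_j => _ < _)) -big_split /=.
  apply: eq_bigr => -[y hy] _; rewrite inE andbT hook_lam_pair_mid //= /in_excited_pair /=.
  by case: (ltnP y u) => h; case: (ltnP r y) => h' /=; rewrite ?muln1 ?mul1n ?orbT //; lia.
rewrite /low_tail [RHS]big_mkcond /=.
by apply: eq_bigr => -[y hy] _; rewrite inE andbT hook_lam_pair_low.
Qed.

Lemma card_excited_pair_top r u : r < j -> #|[set c in ex r u | (c.1 : nat) == 0]| = r.
Proof.
move=> rj; rewrite card_pair_pred !big_ord_recr big_ord0 /= add0n.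
rewrite [X in addn (addn X _) _](@sum_ord_range _ 0 r);
  first rewrite [X in addn (addn _ X) _](@sum_ord_range _ 0 0);
  first rewrite [X in addn _ X](@sum_ord_range _ 0 0).
- lia.
all: by move=> [y hy]; rewrite !inE /in_excited_pair /=; lia.
Qed.

Lemma excited_pair_injr r u v : u <= r -> v <= r -> r < j -> ex r u = ex r v -> u = v.
Proof.
have ex_neq a b : a < b <= r -> r < j -> ex r a != ex r b.
  move=> abr rj; have ha : a < j by lia.
  apply/negP => /eqP/setP/(_ (Ordinal (isT : 1 < 3), Ordinal ha)).
  by rewrite !inE /in_excited_pair /=; lia.
move=> ur vr rj E; case: (ltngtP u v) => // [uv | vu].
- by move: (ex_neq u v); rewrite E eqxx uv vr rj => /(_ isT isT).
- by move: (ex_neq v u); rewrite E eqxx vu ur rj => /(_ isT isT).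
Qed.

End ExcitedPairWeight.

Lemma sI_pair i j I : i < j -> I =i [:: i.+1; j.+1] -> sI I = j.-1.
Proof. by move=> ij IE; rewrite /sI (lamI_pair ij IE). Qed.

Lemma NNcoef_pair i j I k : i < j -> I =i [:: i.+1; j.+1] -> k <= j.-1 ->
  NNcoef I k = pair_coef i j k.
Proof.
move=> ij IE kj; set r := j.-1 - k; have rj : r < j by lia.
have DsetE : Dset (muI I) 3 j = excited_pair i j j.-1 i.
  apply/setP => -[[x hx] [y hy]].
  by rewrite !inE /pos /= (inD_muI_pair _ _ ij IE) /in_excited_pair /=; lia.
rewrite /NNcoef (sI_pair ij IE) /NNcoef_gen (lamI_pair ij IE) /excited /= DsetE.
pose exc := (fun u : 'I_i.+1 => excited_pair i j r u) @: [set u : 'I_i.+1 | u <= r].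
rewrite (eq_bigl (mem exc)) => [|D].
  rewrite big_imset /=; last first.
    by move=> u v; rewrite !inE => ur vr /(excited_pair_injr ij ur vr rj) /val_inj.
  rewrite /pair_coef -/r /weight_sum big_distrr /=; apply: eq_big => u; first by rewrite inE.
  by rewrite inE => ur; rewrite excited_pair_weight.
apply/andP/imsetP => [[/(excited_pairP ij)[r' [u [/and3P[ur' r'j ui] ->]]]] | [u]].
  rewrite card_excited_pair_top // => /eqP r'E; subst r'; have ui' : u < i.+1 by lia.
  by exists (Ordinal ui'); rewrite ?inE.
rewrite inE => ur ->; split; last by rewrite card_excited_pair_top.
apply/(excited_pairP ij); exists r, u; split=> //.
by apply/and3P; split=> //; have := ltn_ord u; lia.
Qed.

(** * Unimodality of the coefficients *)

Section PairCoef.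

Variables i j : nat.

Local Notation P := (mid_tail i j).
Local Notation Q := (mid_head i j).
Local Notation R := (low_tail i j).
Local Notation W := (weight_sum i j).

Lemma mid_tail_gt0 r : 0 < P r.
Proof. by apply: prodn_cond_gt0 => y _; have := ltn_ord y; rewrite /hook_mid; lia. Qed.

Lemma low_tail_gt0 u : 0 < R u.
Proof. by apply: prodn_cond_gt0 => y /=; rewrite /hook_low; lia. Qed.

Lemma mid_head0 : Q 0 = 1.
Proof. by rewrite /mid_head big_pred0. Qed.

Lemma low_tail_i : R i = 1.
Proof. by rewrite /low_tail big_pred0 // => y; lia. Qed.

Lemma weight_sum0 : W 0 = R 0.
Proof.
rewrite /weight_sum (bigD1 ord0) //= big_pred0 ?mid_head0 ?mul1n ?addn0 // => u.
by rewrite -val_eqE /=; lia.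
Qed.

Lemma weight_sum_gt0 r : 0 < W r.
Proof.
rewrite /weight_sum (bigD1 ord0) //= mid_head0 mul1n.
by apply: leq_trans (leq_addr _ _); apply: low_tail_gt0.
Qed.

Lemma pair_coef_gt0 k : 0 < pair_coef i j k.
Proof. by rewrite muln_gt0 mid_tail_gt0 weight_sum_gt0. Qed.

Lemma mid_tail_rec r : 0 < r < j -> P r.-1 = hook_mid i j r * P r.
Proof.
case/andP => r_gt0 rj; rewrite /mid_tail (bigD1 (Ordinal rj)) /=; last lia.
by congr (_ * _); apply: eq_bigl => y; rewrite -val_eqE /=; lia.
Qed.

Lemma mid_head_rec u : u < j -> Q u.+1 = Q u * hook_mid i j u.
Proof.
move=> uj; rewrite /mid_head (bigD1 (Ordinal uj)) //= mulnC.
by congr (_ * _); apply: eq_bigl => y; rewrite -val_eqE /=; lia.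
Qed.

Hypothesis ij : i < j.

Lemma low_tail_rec u : u < i -> R u = hook_low i u.+1 * R u.+1.
Proof.
move=> ui; have uj : u.+1 < j by lia.
rewrite /low_tail (bigD1 (Ordinal uj)) /=; last lia.
by congr (_ * _); apply: eq_bigl => y; rewrite -val_eqE /=; lia.
Qed.

Lemma weight_sum_stable r : i < r -> W r = W r.-1.
Proof. by move=> ir; apply: eq_bigl => u; have := ltn_ord u; lia. Qed.

Lemma weight_sum_rec r : 0 < r <= i -> W r = W r.-1 + Q r * R r.
Proof.
case/andP => r_gt0 ri; have ri' : r < i.+1 by lia.
rewrite /weight_sum (bigD1 (Ordinal ri')) /=; last lia.
by rewrite addnC; congr (_ + _); apply: eq_bigl => u; rewrite -val_eqE /=; lia.
Qed.

(* At k = i - 2 this gives (j - i) W (i - 2) < 2 Q (i - 1), the inequality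
   behind [pair_coef_dip]. *)
Lemma weight_sum_identity k : k < i ->
  (j - i) * W k + i.+1 * R 0 = (i - k) * (Q k.+1 * R k.+1).
Proof.
elim: k => [|k IH] ki.
  rewrite weight_sum0 (low_tail_rec ki) mid_head_rec ?mid_head0; last lia.
  by rewrite /hook_mid /hook_low; set R1 := R 1; nia.
rewrite weight_sum_rec /=; last lia.
rewrite mulnDr addnAC IH; last lia.
rewrite (@mid_head_rec k.+1) ?(@low_tail_rec k.+1) -?mulnDl; try lia.
have -> : hook_mid i j k.+1 = i - k + (j - i) by rewrite /hook_mid; lia.
have -> : hook_low i k.+2 = i - k.+1 by rewrite /hook_low; lia.
by ring.
Qed.

Lemma pair_coef_rise k : k < j.-1 -> i < j.-1 - k -> pair_coef i j k <= pair_coef i j k.+1.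
Proof.
move=> kj ir; rewrite /pair_coef (_ : j.-1 - k.+1 = (j.-1 - k).-1); last lia.
rewrite mid_tail_rec -?weight_sum_stable //; last lia.
by rewrite -mulnA leq_pmull // /hook_mid; lia.
Qed.

Lemma pair_coef_dip : 1 < i -> pair_coef i j (j.-1 - i).+1 < pair_coef i j (j.-1 - i).
Proof.
move=> i_gt1; rewrite /pair_coef (_ : j.-1 - (j.-1 - i).+1 = i.-1); last lia.
rewrite (_ : j.-1 - (j.-1 - i) = i); last lia.
have Pi : P i.-1 = (j - i + 1) * P i by rewrite mid_tail_rec /hook_mid; lia.
have Ri : R i.-1 = 1 by rewrite low_tail_rec ?prednK ?low_tail_i /hook_low; lia.
have Wi : W i = W i.-1 + Q i by rewrite weight_sum_rec ?low_tail_i ?muln1 //; lia.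
have Wi1 : W i.-1 = W i.-2 + Q i.-1 by rewrite weight_sum_rec ?Ri ?muln1 //; lia.
have Qi : Q i = Q i.-1 * (j - i + 2).
  have ij' : i.-1 < j by lia.
  move: (mid_head_rec ij'); rewrite prednK => [->|]; last lia.
  by rewrite /hook_mid; congr (_ * _); lia.
have defect : (j - i) * W i.-2 + i.+1 * R 0 = 2 * Q i.-1.
  rewrite weight_sum_identity; last lia.
  rewrite (_ : i - i.-2 = 2); last lia.
  by rewrite (_ : i.-2.+1 = i.-1) ?Ri ?muln1 //; lia.
rewrite Pi Wi Wi1 Qi mulnAC [X in _ < X]mulnC ltn_pmul2r ?mid_tail_gt0 //.
by have := low_tail_gt0 0; lia.
Qed.

Lemma pair_coef_last : 0 < i ->
  pair_coef i j j.-1 * (i + j + 1) = pair_coef i j j.-2 * (i * j).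
Proof.
move=> i_gt0; rewrite /pair_coef subnn (_ : j.-1 - j.-2 = 1); last lia.
have P0 : P 0 = j * P 1 by rewrite (@mid_tail_rec 1) /hook_mid; [congr (_ * _) |]; lia.
have R0 : R 0 = i * R 1 by rewrite low_tail_rec /hook_low; [congr (_ * _) |]; lia.
have Q1 : Q 1 = j.+1 by rewrite mid_head_rec ?mid_head0 /hook_mid; lia.
rewrite P0 (@weight_sum_rec 1); last lia.
by rewrite /= weight_sum0 R0 Q1; ring.
Qed.

Lemma unimodal_pair_coef : unimodal (pair_coef i j) j.-1 = (i <= 1) || (j <= 3).
Proof.
have [i_le1 | i_gt1] /= := leqP i 1.
  apply: (@unimodal_peak _ _ (j.-1 - i)) => [|k kp|k /andP[pk kj]]; first lia.
    by apply: pair_coef_rise; lia.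
  have i1 : i = 1 by lia.
  have i_gt0 : 0 < i by rewrite i1.
  have := pair_coef_last i_gt0; rewrite i1 (_ : k = j.-2); last lia.
  by rewrite (_ : j.-2.+1 = j.-1); [nia | lia].
have := pair_coef_last (ltnW i_gt1); have := pair_coef_dip i_gt1.
have [j_le3 | j_gt3] := leqP j 3.
  have [-> ->] : i = 2 /\ j = 3 by lia.
  move=> dip last_step; apply: (@unimodal_peak _ _ 0) => // -[|[|k]] //= _.
  - exact: ltnW.
  - by move: last_step; rewrite /=; lia.
move=> dip last_step; apply/negbTE/(@unimodal_dip_rise _ _ (j.-1 - i) j.-2) => //; first lia.
rewrite (_ : j.-2.+1 = j.-1); last lia.
have ij1 : 0 < i + j + 1 by lia.
by rewrite -(ltn_pmul2r ij1) last_step ltn_pmul2l ?pair_coef_gt0 //; nia.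
Qed.

End PairCoef.

Lemma mem_descI_pair n (x y : 'I_n) : descI [set x; y] =i [:: x.+1; y.+1].
Proof.
move=> k; rewrite !inE; apply/mapP/idP => [[z] | /orP[] /eqP->].
- by rewrite mem_enum !inE => /orP[] /eqP-> ->; rewrite eqxx ?orbT.
- by exists x; rewrite // mem_enum !inE eqxx.
- by exists y; rewrite // mem_enum !inE eqxx orbT.
Qed.

Lemma unimodal_NNcoef_pair n (x y : 'I_n) : x < y ->
  unimodal (NNcoef (descI [set x; y])) (sI (descI [set x; y])) = (x <= 1) || (y <= 3).
Proof.
move=> xy; have IE := mem_descI_pair x y.
rewrite (sI_pair xy IE) -(unimodal_pair_coef xy); apply: eq_unimodal => k kj.
exact: NNcoef_pair.
Qed.

Lemma card_2subsets n (P : pred {set 'I_n}) :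
  #|[set I : {set 'I_n} | (#|I| == 2) && P I]| =
  #|[set p : 'I_n * 'I_n | (p.1 < p.2) && P [set p.1; p.2]]|.
Proof.
rewrite -(@card_in_imset _ _ (fun p : 'I_n * 'I_n => [set p.1; p.2])).
  apply: eq_card => I; rewrite inE; apply/andP/imsetP => [[/cards2P[x [y [xy ->]]] PI] | ].
    case: (ltngtP x y) => [lt | gt | /val_inj eq]; last by rewrite eq eqxx in xy.
      by exists (x, y); rewrite ?inE /= ?lt.
    by exists (y, x); rewrite ?inE /= setUC ?gt.
  case=> -[x y]; rewrite inE /= => /andP[xy PI] ->; split=> //.
  by rewrite cards2 -val_eqE neq_ltn xy.
move=> [x1 y1] [x2 y2]; rewrite !inE /= => /andP[xy1 _] /andP[xy2 _] E.
have memE z : (z == x1) || (z == y1) = (z == x2) || (z == y2).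
  by move/setP: E => /(_ z); rewrite !inE.
move: (memE x1) (memE y1) (memE x2); rewrite !eqxx ?orbT -!val_eqE /= => /esym h1 /esym h2 h3.
by congr pair; apply: ord_inj; lia.
Qed.

Lemma bin2_double n : ('C(n, 2)).*2 = n * n.-1.
Proof. by rewrite bin2 halfK oddM; case: n => //= n; rewrite andNb subn0. Qed.

Lemma card_small_pairs n : 4 <= n ->
  #|[set p : 'I_n * 'I_n | (p.1 < p.2) && ((p.1 <= 1) || (p.2 <= 3))]| = (n.-1).*2.
Proof.
move=> n4; rewrite card_pair_pred exchange_big /=.
rewrite (eq_bigr (fun y : 'I_n => if y <= 3 then y : nat else 2)) => [|y _].
  elim: n n4 => // n IH; rewrite leq_eqVlt => /orP[/eqP <- | n4].
    by rewrite !big_ord_recr big_ord0.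
  by rewrite big_ord_recr /= IH //; case: ifP; lia.
rewrite (@sum_ord_range _ 0 (if y <= 3 then y : nat else 2)) => [|x].
  by have := ltn_ord y; case: ifP; lia.
by case: ifP; lia.
Qed.

Theorem corollary6p3 (n : nat) (hn : (4 <= n)%N) :
  ((#|[set I : {set 'I_n} | (#|I| == 2)%N &&
        unimodal (NNcoef (descI I)) (sI (descI I))]|%:R
   / #|[set I : {set 'I_n} | (#|I| == 2)%N]|%:R)%R : rat) = (4%:R / n%:R)%R.
Proof.
have pairsE : [set p : 'I_n * 'I_n | (p.1 < p.2) &&
    unimodal (NNcoef (descI [set p.1; p.2])) (sI (descI [set p.1; p.2]))] =
    [set p : 'I_n * 'I_n | (p.1 < p.2) && ((p.1 <= 1) || (p.2 <= 3))].
  by apply/setP => -[x y]; rewrite !inE /=; case: ltnP => //= xy; rewrite unimodal_NNcoef_pair.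
rewrite (card_2subsets (fun I => unimodal (NNcoef (descI I)) (sI (descI I)))) pairsE.
rewrite card_small_pairs // card_draws card_ord.
have bin2_gt0 : 'C(n, 2) != 0 by rewrite -double_eq0 bin2_double; lia.
apply/eqP; rewrite GRing.eqr_div ?Num.Theory.pnatr_eq0 //; last lia.
by rewrite -!GRing.natrM Num.Theory.eqr_nat; apply/eqP; have := bin2_double n; nia.
Qed.
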